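(* Let $(t_1,s_1),(t_2,s_2)\in\mathbb{C}^\times\times\mathbb{C}^\times$ with $t_1\ne t_2$ and $s_1\neq s_2$, let $X_1=A_2(t_1,s_1)$, $X_2=A_2(t_2,s_2)$, let $\varepsilon_0=\det(X_1)+\det(X_2)-\det(X_1+X_2)$, and for $n\in\mathbb{N}$ let $f_n(z)=\sum_{k=0}^{\lfloor n/2\rfloor}(-1)^k\frac{n}{n-k}\binom{n-k}{k}z^{n-2k}$. Then $(X_1X_2)^n+(X_2X_1)^n=f_n(\varepsilon_0)I_2$ for all $n\in\mathbb{N}$.
   Context: $\mathbb{C}^\times=\mathbb{C}\setminus\{0\}$; $A_2(t,s)=\begin{pmatrix} t & s\\ \frac{1-t^2}{s} & -t\end{pmatrix}$; $I_2$ is the $2\times2$ identity matrix; $\lfloor n/2\rfloor$ is the largest integer $\le n/2$. *)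

From HB Require Import structures.
From mathcomp Require Import all_boot all_order all_algebra.
From mathcomp Require Import complex.
From mathcomp Require Import Rstruct.
Set Implicit Arguments. Unset Strict Implicit. Unset Printing Implicit Defensive.
Import Order.TTheory GRing.Theory Num.Theory.
Local Open Scope ring_scope.

Notation Cplx := (Rdefinitions.R [i]).

Definition A2 (t s : Cplx) : 'M[Cplx]_2 :=
  \matrix_(i < 2, j < 2)
    if (i == 0) && (j == 0) then t
    else if (i == 0) then s
    else if (j == 0) then (1 - t ^+ 2) / s
    else - t.

Definition f_poly (n : nat) (z : Cplx) : Cplx :=
  \sum_(0 <= k < (n./2).+1)
    (-1) ^+ k * (n%:R / (n - k)%:R) * ('C(n - k, k))%:R * z ^+ (n - 2 * k).

(* With s != 0, A_2(t,s) has trace 0 and determinant -1, so it squares to I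
   (Cayley-Hamilton); thus M = X1 X2 and N = X2 X1 are mutually inverse.
   Polarizing Cayley-Hamilton for 2x2 matrices gives
   X1 X2 + X2 X1 = (tr X1) X2 + (tr X2) X1 + eps0 I = eps0 I.  Hence
   p_n = M^n + N^n satisfies p_(n+2) = eps0 p_(n+1) - p_n, and f_n obeys the
   same recurrence because f_n = U_n - U_(n-2) with U_n the Chebyshev polynomial
   of the second kind evaluated at z/2, while p_1 = f_1 and p_2 = f_2. *)

From HB Require Import structures.
From mathcomp Require Import all_boot all_order all_algebra.
From mathcomp Require Import complex.
From mathcomp Require Import Rstruct.
From mathcomp Require Import zify ring.
Set Implicit Arguments.
Unset Strict Implicit.
Unset Printing Implicit Defensive.
Import Order.TTheory GRing.Theory Num.Theory.
Local Open Scope ring_scope.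

Lemma ord2P (P : 'I_2 -> Prop) : P 0 -> P 1 -> forall i, P i.
Proof.
move=> P0 P1 [[|[|//]] lt_i2].
  by rewrite (_ : Ordinal _ = 0) //; apply/val_inj.
by rewrite (_ : Ordinal _ = 1) //; apply/val_inj.
Qed.

Section Matrix22.
Variable R : comPzRingType.
Implicit Types A B : 'M[R]_2.

Let lift0_ord2 : lift ord0 ord0 = 1 :> 'I_2. Proof. exact/val_inj. Qed.
Let lift1_ord1 : lift 1 ord0 = 0 :> 'I_2. Proof. exact/val_inj. Qed.

Lemma trace_mx22 A : \tr A = A 0 0 + A 1 1.
Proof. by rewrite /mxtrace !big_ord_recl big_ord0 addr0 lift0_ord2. Qed.

Lemma det_mx22 A : \det A = A 0 0 * A 1 1 - A 0 1 * A 1 0.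
Proof.
rewrite (expand_det_row _ 0) !big_ord_recl big_ord0 addr0 /cofactor !det_mx11 !mxE.
rewrite lift0_ord2 lift1_ord1 /= expr0 expr1; ring.
Qed.

Lemma mulmx22E A B i j : (A *m B) i j = A i 0 * B 0 j + A i 1 * B 1 j.
Proof. by rewrite !mxE !big_ord_recl big_ord0 addr0 lift0_ord2. Qed.

Lemma mx22_sqr A : A *m A = \tr A *: A - (\det A)%:M.
Proof.
rewrite trace_mx22 det_mx22; apply/matrixP; apply: ord2P; apply: ord2P;
  rewrite mulmx22E !mxE /=; ring.
Qed.

Lemma mx22_anticomm A B :
  A *m B + B *m A = \tr A *: B + \tr B *: A + (\det A + \det B - \det (A + B))%:M.
Proof.
rewrite !trace_mx22 !det_mx22; apply/matrixP; apply: ord2P; apply: ord2P;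
  rewrite [in LHS]mxE !mulmx22E !mxE /=; ring.
Qed.

End Matrix22.

Section A2.
Variables t s : Cplx.
Hypothesis s_neq0 : s != 0.

Lemma trace_A2 : \tr (A2 t s) = 0.
Proof. by rewrite trace_mx22 !mxE /= subrr. Qed.

Lemma det_A2 : \det (A2 t s) = -1.
Proof. by rewrite det_mx22 !mxE /=; field. Qed.

Lemma A2_sqr : A2 t s *m A2 t s = 1.
Proof. by rewrite mx22_sqr trace_A2 det_A2 scale0r sub0r -raddfN opprK. Qed.

End A2.

Lemma A2_anticomm t1 s1 t2 s2 :
  let X1 := A2 t1 s1 in let X2 := A2 t2 s2 in
  X1 *m X2 + X2 *m X1 = (\det X1 + \det X2 - \det (X1 + X2))%:M.
Proof. by rewrite /= mx22_anticomm !trace_A2 !scale0r !add0r. Qed.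

Section ChebyshevU.
Variable R : comPzRingType.
Implicit Type z : R.

Definition chebU_term n k z : R := (-1) ^+ k * 'C(n - k, k)%:R * z ^+ (n - 2 * k).

(* [chebU n z] is U_n(z/2), U_n the Chebyshev polynomial of the second kind. *)
Definition chebU n z := \sum_(k < n.+1) chebU_term n k z.

Lemma chebU_term_eq0 n k z : (n < 2 * k)%N -> chebU_term n k z = 0.
Proof. by move=> lt_n_2k; rewrite /chebU_term bin_small ?mulr0 ?mul0r //; lia. Qed.

Lemma chebU_termSS n k z :
  chebU_term n.+2 k.+1 z = z * chebU_term n.+1 k.+1 z - chebU_term n k z.
Proof.
have [lt_n_k | le_k_n] := ltnP n k.
  by rewrite !chebU_term_eq0 ?mulr0 ?subrr //; lia.
rewrite /chebU_term (_ : n.+2 - k.+1 = (n - k).+1)%N; last by lia.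
rewrite (_ : n.+1 - k.+1 = n - k)%N; last by lia.
rewrite (_ : n.+2 - 2 * k.+1 = n - 2 * k)%N; last by lia.
set C1 := 'C(n - k, k.+1); set e := (n.+1 - 2 * k.+1)%N.
(* [e] is truncated when n = 2k, but then C1 = 0. *)
have zC : C1%:R * z ^+ (n - 2 * k) = C1%:R * (z * z ^+ e) :> R.
  have [lt_nk_k1 | le_k1_nk] := ltnP (n - k) k.+1.
    by rewrite /C1 bin_small // !mul0r.
  by rewrite -exprS /e (_ : (n.+1 - 2 * k.+1).+1 = n - 2 * k)%N //; lia.
rewrite binS natrD -/C1.
transitivity ((-1) ^+ k.+1 * (C1%:R * z ^+ (n - 2 * k)) +
              (-1) ^+ k.+1 * 'C(n - k, k)%:R * z ^+ (n - 2 * k)); first ring.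
by rewrite zC !(exprS (-1 : R)); ring.
Qed.

Lemma chebU_widen n m z : (n < m)%N -> chebU n z = \sum_(k < m) chebU_term n k z.
Proof.
move=> lt_n_m; rewrite /chebU (big_ord_widen m (chebU_term n ^~ z) lt_n_m).
rewrite big_mkcond; apply: eq_bigr => k _; case: ltnP => // le_n1_k.
by rewrite chebU_term_eq0 //; lia.
Qed.

Lemma chebU0 z : chebU 0 z = 1.
Proof. by rewrite /chebU big_ord1 /chebU_term bin0 !mul1r. Qed.

Lemma chebU1 z : chebU 1 z = z.
Proof.
by rewrite /chebU big_ord_recr big_ord1 /chebU_term /= bin0 bin0n !mul1r mulr0 mul0r addr0.
Qed.

Lemma chebUSS n z : chebU n.+2 z = z * chebU n.+1 z - chebU n z.
Proof.
rewrite (@chebU_widen n.+1 n.+3) ?(@chebU_widen n n.+2) //.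
rewrite /chebU big_ord_recl [in X in z * X]big_ord_recl.
have -> : chebU_term n.+2 0 z = z * chebU_term n.+1 0 z.
  by rewrite /chebU_term !subn0 !bin0 exprS; ring.
under eq_bigr => k _ do rewrite lift0 chebU_termSS.
under [X in _ * (_ + X)]eq_bigr => k _ do rewrite lift0.
by rewrite big_split /= sumrN mulrDr mulr_sumr addrA.
Qed.

End ChebyshevU.

(* The coefficient identity n/(n-k) C(n-k,k) = C(n-k,k) + C(n-k-1,k-1) of
   f_n = U_n - U_(n-2), cleared of denominators with n = j + k + 2. *)
Lemma mul_bin_diagD j k :
  ((j + k).+2 * 'C(j.+1, k.+1) = j.+1 * ('C(j.+1, k.+1) + 'C(j, k)))%N.
Proof. by rewrite mulnDr (mul_bin_diag j.+1 k) -mulnDl; congr (_ * _)%N; lia. Qed.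

Definition f_poly_term n k z : Cplx :=
  (-1) ^+ k * (n%:R / (n - k)%:R) * 'C(n - k, k)%:R * z ^+ (n - 2 * k).

Lemma f_poly_widen n m z : (n./2 < m)%N -> f_poly n z = \sum_(k < m) f_poly_term n k z.
Proof.
move=> lt_half_m; rewrite /f_poly big_mkord (big_ord_widen m (f_poly_term n ^~ z) lt_half_m).
rewrite big_mkcond; apply: eq_bigr => k _; case: ltnP => //.
rewrite ltn_half_double -mul2n => lt_n_2k.
by rewrite /f_poly_term bin_small ?mulr0 ?mul0r //; lia.
Qed.

Lemma f_poly_termSS m k z :
  f_poly_term m.+2 k.+1 z = chebU_term m.+2 k.+1 z - chebU_term m k z.
Proof.
rewrite /f_poly_term /chebU_term.
rewrite (_ : m.+2 - 2 * k.+1 = m - 2 * k)%N; last by lia.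
have [lt_m_2k | le_2k_m] := ltnP m (2 * k).
  by rewrite !bin_small ?mulr0 ?mul0r ?subrr //; lia.
have [j ->] : exists j, m = (j + k)%N by exists (m - k)%N; lia.
rewrite (_ : (j + k).+2 - k.+1 = j.+1)%N; last by lia.
rewrite (_ : (j + k - k = j)%N); last by lia.
have quot_bin : (j + k).+2%:R / j.+1%:R * 'C(j.+1, k.+1)%:R
                = 'C(j.+1, k.+1)%:R + 'C(j, k)%:R :> Cplx.
  rewrite mulrAC -natrM mul_bin_diagD natrM mulrC mulrA mulVf ?mul1r ?natrD //.
  by rewrite pnatr_eq0.
by rewrite -[_ * 'C(j.+1, k.+1)%:R]mulrA quot_bin exprS; ring.
Qed.

Lemma f_poly_term0 n z : (0 < n)%N -> f_poly_term n 0 z = chebU_term n 0 z.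
Proof. by move=> n_gt0; rewrite /f_poly_term /chebU_term subn0 divff ?mulr1 // pnatr_eq0 -lt0n. Qed.

Lemma f_poly_chebU m z : f_poly m.+2 z = chebU m.+2 z - chebU m z.
Proof.
rewrite (@f_poly_widen _ m.+3) ?ltn_half_double; last by rewrite -mul2n; lia.
rewrite (@chebU_widen _ m m.+2) // /chebU big_ord_recl.
rewrite [in X in _ = X - _]big_ord_recl f_poly_term0 //.
under eq_bigr => k _ do rewrite lift0 f_poly_termSS.
under [X in _ = _ + X - _]eq_bigr => k _ do rewrite lift0.
by rewrite big_split /= sumrN addrA.
Qed.

Lemma f_poly1 z : f_poly 1 z = z.
Proof. by rewrite /f_poly big_nat1 subn0 divff ?oner_eq0 // bin0 !mul1r expr1. Qed.

(* The hypothesis is needed: f_poly 0 z = 0 because 0 / 0 = 0. *)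
Lemma f_polySS n z : (0 < n)%N -> f_poly n.+2 z = z * f_poly n.+1 z - f_poly n z.
Proof.
case: n => [|[|m]] // _; rewrite !f_poly_chebU.
  by rewrite f_poly1 !chebUSS chebU1 chebU0; ring.
by rewrite (chebUSS m.+2) (chebUSS m); ring.
Qed.

Lemma powsum_invSS (R : pzRingType) (M N : R) n : M * N = 1 -> N * M = 1 ->
  M ^+ n.+2 + N ^+ n.+2 = (M + N) * (M ^+ n.+1 + N ^+ n.+1) - (M ^+ n + N ^+ n).
Proof.
move=> MN1 NM1; rewrite mulrDl !mulrDr -!exprS.
rewrite [in M * _]exprS [in N * M ^+ _]exprS !mulrA MN1 NM1 !mul1r.
by rewrite addrACA [N ^+ n + _]addrC addrACA addrK.
Qed.

Lemma powsum_inv_f_poly (M N : 'M[Cplx]_2) z n : M * N = 1 -> N * M = 1 ->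
  M + N = z%:M -> (0 < n)%N -> M ^+ n + N ^+ n = (f_poly n z)%:M.
Proof.
move=> MN1 NM1 MN_z; case: n => // n _.
suff powsum_pair : M ^+ n.+1 + N ^+ n.+1 = (f_poly n.+1 z)%:M /\
                   M ^+ n.+2 + N ^+ n.+2 = (f_poly n.+2 z)%:M by case: powsum_pair.
elim: n => [|n [IH1 IH2]].
  have P1 : M ^+ 1 + N ^+ 1 = (f_poly 1 z)%:M by rewrite !expr1 f_poly1.
  split=> //; rewrite powsum_invSS // P1 !expr0 f_poly1 f_poly_chebU (chebUSS 0).
  by rewrite chebU1 chebU0 !raddfB /= scalar_mxM mulmxE opprD addrA.
split=> //; rewrite powsum_invSS // IH1 IH2 MN_z (@f_polySS n.+1) //.
by rewrite -mulmxE -scalar_mxM -raddfB.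
Qed.

Theorem mainTheorem10 (t1 s1 t2 s2 : Cplx)
  (ht1 : t1 != 0) (hs1 : s1 != 0) (ht2 : t2 != 0) (hs2 : s2 != 0)
  (ht : t1 != t2) (hs : s1 != s2) (n : nat) (hn : (0 < n)%N) :
  let X1 := A2 t1 s1 in
  let X2 := A2 t2 s2 in
  let eps0 := \det X1 + \det X2 - \det (X1 + X2) in
  (X1 *m X2) ^+ n + (X2 *m X1) ^+ n = (f_poly n eps0)%:M.
Proof.
move=> X1 X2 eps0.
have X1_sqr : X1 *m X1 = 1 := A2_sqr t1 hs1.
have X2_sqr : X2 *m X2 = 1 := A2_sqr t2 hs2.
apply: powsum_inv_f_poly hn; last exact: A2_anticomm.
- by rewrite -mulmxE mulmxA -(mulmxA X1) X2_sqr mulmx1.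
- by rewrite -mulmxE mulmxA -(mulmxA X2) X1_sqr mulmx1.
Qed.
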